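(* Let $\mathcal G$ be a finite connected groupoid and $\alpha=(S_g,\alpha_g)_{g\in\mathcal G}$ a unital group-type partial action of $\mathcal G$ on a ring $S=\bigoplus_{y\in\mathcal G_0}S_y$, with $S_g=S1_g$ and $1_g\neq0$ for all $g\in\mathcal G$. Let $\mathcal H\in\mathrm{wSub}_\alpha(\mathcal G)$, with connected components $\mathcal H_1,\dots,\mathcal H_r$ having object sets $Y_1,\dots,Y_r$ (so $\mathcal G_0=Y_1\,\dot\cup\cdots\dot\cup\,Y_r$). For each $j$ choose $y_j\in Y_j$ and a transversal $\tau_j=\{\tau_{j,z}\}_{z\in Y_j}$ in $\mathcal H_j$ for $y_j$ satisfying $S_{\tau_{j,z}^{-1}}=S_{y_j}$ and $S_{\tau_{j,z}}=S_z$ for all $z\in Y_j$. Let $T=S^{\alpha_{\mathcal H}}$ and $T_{y_j}=S_{y_j}^{\alpha_{\mathcal H_j(y_j)}}$. Then for $g\in\mathcal G$: $g\in\mathcal G_T$ if and only if there exists $1\le k\le r$ such that $s(g),t(g)\in Y_k$ and $\tau_k(g):=\tau_{k,t(g)}^{-1}g\,\tau_{k,s(g)}\in\mathcal G(y_k)_{T_{y_k}}$.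
   Context: A groupoid is a small category with all morphisms invertible; $\mathcal G_0$ is its object set (identified with identity morphisms), $s(g),t(g)$ source and target, $\mathcal G(x,y)=\{g:s(g)=x,t(g)=y\}$, $\mathcal G(x)=\mathcal G(x,x)$; $gh$ defined iff $s(g)=t(h)$; connected means all $\mathcal G(x,y)\ne\emptyset$; connected components are full subgroupoids on classes of $x\sim y\iff\mathcal G(x,y)\neq\emptyset$. A partial action $\alpha=(S_g,\alpha_g)_{g\in\mathcal G}$ on a ring $S$: for each $g$, $S_{t(g)}$ is an ideal of $S$, $S_g$ an ideal of $S_{t(g)}$, $\alpha_g:S_{g^{-1}}\to S_g$ a ring isomorphism; $\alpha_x=\mathrm{id}_{S_x}$; for composable $(g,h)$, $\alpha_h^{-1}(S_{g^{-1}}\cap S_h)\subseteq S_{(gh)^{-1}}$ and $\alpha_g\alpha_h(a)=\alpha_{gh}(a)$ there. Unital: $S_g=S1_g$, $1_g$ central idempotent. A transversal for $x$ in a connected groupoid $\mathcal K$ is $\{\tau_y\}_{y\in\mathcal K_0}$ with $\tau_y\in\mathcal K(x,y)$, $\tau_x=x$; a partial action of connected $\mathcal K$ on $A=\bigoplus_{y\in\mathcal K_0}A_y$ is group-type if some $x$ and transversal satisfy $A_{\tau_y^{-1}}=A_x$, $A_{\tau_y}=A_y$ for all $y$; for non-connected $\mathcal K$ it is group-type if each restriction to a connected component $\mathcal K_Y$ (acting on $\bigoplus_{y\in Y}A_y$) is group-type. For a subgroupoid $\mathcal H$, $\alpha_{\mathcal H}=(S_h,\alpha_h)_{h\in\mathcal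 H}$ acts on $\bigoplus_{z\in\mathcal H_0}S_z$. $\mathrm{wSub}_\alpha(\mathcal G)$ is the set of subgroupoids $\mathcal H$ with $\mathcal H_0=\mathcal G_0$ (wide) and $\alpha_{\mathcal H}$ group-type. For a subgroupoid $\mathcal K$ and subring $A\subseteq S$, $A^{\alpha_{\mathcal K}}=\{a\in A:\alpha_k(a1_{k^{-1}})=a1_k\ \forall k\in\mathcal K\}$. For a subring $T\subseteq S$, $\mathcal G_T=\{g\in\mathcal G:\alpha_g(t1_{g^{-1}})=t1_g\ \forall t\in T\}$; for $y\in\mathcal G_0$ and a subring $B\subseteq S_y$, $\mathcal G(y)_B=\{l\in\mathcal G(y):\alpha_l(b1_{l^{-1}})=b1_l\ \forall b\in B\}$. *)

From HB Require Import structures.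
From mathcomp Require Import all_boot all_algebra.
Set Implicit Arguments. Unset Strict Implicit. Unset Printing Implicit Defensive.
Import GRing.Theory.
Local Open Scope ring_scope.

(* A finite groupoid: finite set of objects, finite set of morphisms,
   source/target, identities (objects are identified with identity
   morphisms via [gid]), inverses and a composition [gmul g h] = gh,
   meaningful when gsrc g = gtgt h. *)
Record groupoid := Groupoid {
  gobj : finType;
  gmor : finType;
  gsrc : gmor -> gobj;
  gtgt : gmor -> gobj;
  gid : gobj -> gmor;
  ginv : gmor -> gmor;
  gmul : gmor -> gmor -> gmor;
  gsrc_id : forall x, gsrc (gid x) = x;
  gtgt_id : forall x, gtgt (gid x) = x;
  gsrc_mul : forall g h, gsrc g = gtgt h -> gsrc (gmul g h) = gsrc h;
  gtgt_mul : forall g h, gsrc g = gtgt h -> gtgt (gmul g h) = gtgt g;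
  gmulA : forall g h k, gsrc g = gtgt h -> gsrc h = gtgt k ->
            gmul (gmul g h) k = gmul g (gmul h k);
  gmul_idl : forall g, gmul (gid (gtgt g)) g = g;
  gmul_idr : forall g, gmul g (gid (gsrc g)) = g;
  gsrc_inv : forall g, gsrc (ginv g) = gtgt g;
  gtgt_inv : forall g, gtgt (ginv g) = gsrc g;
  gmulVg : forall g, gmul (ginv g) g = gid (gsrc g);
  gmulgV : forall g, gmul g (ginv g) = gid (gtgt g)
}.

Definition gconnected (G : groupoid) : Prop :=
  forall x y : gobj G, exists g : gmor G, gsrc g = x /\ gtgt g = y.

Definition subgroupoid (G : groupoid) (H : {set gmor G}) : Prop :=
  [/\ forall g h, g \in H -> h \in H -> gsrc g = gtgt h -> gmul g h \in H,
      forall g, g \in H -> ginv g \in H &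
      forall g, g \in H -> gid (gsrc g) \in H].

Definition wide_subgroupoid (G : groupoid) (H : {set gmor G}) : Prop :=
  subgroupoid H /\ forall x, gid x \in H.

Definition hconn (G : groupoid) (H : {set gmor G}) (x y : gobj G) : Prop :=
  exists2 h, h \in H & gsrc h = x /\ gtgt h = y.

Section PartialAction.
Variables (G : groupoid) (S : pzRingType).
(* unital partial action data: e g = 1_g, S_g = S 1_g, alpha g = alpha_g
   (only its values on S_{g^-1} matter) *)
Variables (e : gmor G -> S) (alpha : gmor G -> S -> S).

Definition inS (g : gmor G) (a : S) : Prop := exists s, a = s * e g.

Definition sameS (g h : gmor G) : Prop := forall a, inS g a <-> inS h a.

Definition central_idem (c : S) : Prop := c * c = c /\ forall s, c * s = s * c.

Definition dsum_objects : Prop :=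
  (forall s : S, exists f : gobj G -> S,
      (forall y, inS (gid y) (f y)) /\ s = \sum_(y : gobj G) f y) /\
  (forall f f' : gobj G -> S,
      (forall y, inS (gid y) (f y)) -> (forall y, inS (gid y) (f' y)) ->
      \sum_(y : gobj G) f y = \sum_(y : gobj G) f' y -> forall y, f y = f' y).

Definition ring_iso_on (g : gmor G) : Prop :=
  (forall a, inS (ginv g) a -> inS g (alpha g a)) /\
  (forall a b, inS (ginv g) a -> inS (ginv g) b ->
     alpha g (a + b) = alpha g a + alpha g b) /\
  (forall a b, inS (ginv g) a -> inS (ginv g) b ->
     alpha g (a * b) = alpha g a * alpha g b) /\
  (forall a b, inS (ginv g) a -> inS (ginv g) b -> alpha g a = alpha g b -> a = b) /\
  (forall c, inS g c -> exists2 a, inS (ginv g) a & alpha g a = c).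

Definition unital_partial_action : Prop :=
  (forall g, central_idem (e g)) /\
  (* S_g is an ideal of S_{t(g)} (S_{t(g)} is an ideal of S as 1_{t(g)} is central) *)
  (forall g a, inS g a -> inS (gid (gtgt g)) a) /\
  (forall g, ring_iso_on g) /\
  (forall x a, inS (gid x) a -> alpha (gid x) a = a) /\
  (forall g h, gsrc g = gtgt h -> forall a, inS (ginv h) a ->
     inS (ginv g) (alpha h a) -> inS h (alpha h a) ->
     inS (ginv (gmul g h)) a /\ alpha g (alpha h a) = alpha (gmul g h) a).

(* group-type restriction to the subgroupoid H (component-wise); for
   H = all of a connected G this is the connected definition *)
Definition group_type_on (H : {set gmor G}) : Prop :=
  forall z : gobj G, exists x, hconn H z x /\
    exists tau : gobj G -> gmor G, tau x = gid x /\
      forall y, hconn H z y ->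
        [/\ tau y \in H, gsrc (tau y) = x, gtgt (tau y) = y,
            sameS (ginv (tau y)) (gid x) & sameS (tau y) (gid y)].

Definition wSub (H : {set gmor G}) : Prop :=
  wide_subgroupoid H /\ group_type_on H.

Definition fixring (A : S -> Prop) (K : gmor G -> Prop) (a : S) : Prop :=
  A a /\ forall k, K k -> alpha k (a * e (ginv k)) = a * e k.

Definition stabG (T : S -> Prop) (g : gmor G) : Prop :=
  forall t, T t -> alpha g (t * e (ginv g)) = t * e g.

Definition stabGy (y : gobj G) (B : S -> Prop) (l : gmor G) : Prop :=
  [/\ gsrc l = y, gtgt l = y & stabG B l].

End PartialAction.

(* Call w full when S_w = S_{t(w)} and S_{w^-1} = S_{s(w)}, as every transversal arrow
   τ_z is.  Then α_w is an isomorphism S_{s(w)} -> S_{t(w)} composing exactly with every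
   α_k on either side, so conjugation by the transversal turns "α_g fixes b" into
   "α_{τ(g)} fixes a" whenever b 1_{s(g)} = α_{τ_{s(g)}}(a) and b 1_{t(g)} = α_{τ_{t(g)}}(a).
   Every t in T has this shape with a = t 1_y in T_y, and every a in T_y spreads to
   Σ_{z in Y} α_{τ_z}(a) in T.  Spreading 1_y shows that an arrow of G_T cannot join two
   components, since 1_g <> 0. *)

From HB Require Import structures.
From mathcomp Require Import all_boot all_algebra.
Set Implicit Arguments. Unset Strict Implicit. Unset Printing Implicit Defensive.
Import GRing.Theory.
Local Open Scope ring_scope.

Section Groupoid.
Variable G : groupoid.
Implicit Types g h k w x : gmor G.

Lemma ginv_uniq x k : gsrc x = gtgt k -> gmul x k = gid (gsrc k) -> x = ginv k.
Proof.
move=> sx xk.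
rewrite -[x]gmul_idr sx -gmulgV -gmulA ?gtgt_inv // xk.
by rewrite -gtgt_inv gmul_idl.
Qed.

Lemma ginvK g : ginv (ginv g) = g.
Proof. by apply/esym/ginv_uniq; rewrite ?gmulgV ?gsrc_inv ?gtgt_inv. Qed.

Lemma ginv_mul g h : gsrc g = gtgt h -> ginv (gmul g h) = gmul (ginv h) (ginv g).
Proof.
move=> gh; symmetry; apply: ginv_uniq.
  by rewrite gsrc_mul ?gsrc_inv ?gtgt_inv // gtgt_mul.
rewrite gmulA ?gsrc_inv ?gtgt_inv ?gtgt_mul ?gsrc_mul //.
by rewrite -(@gmulA _ (ginv g)) ?gsrc_inv ?gtgt_inv // gmulVg gh gmul_idl gmulVg.
Qed.

Lemma gmulKg w k : gsrc w = gtgt k -> gmul (ginv w) (gmul w k) = k.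
Proof. by move=> wk; rewrite -gmulA ?gsrc_inv // gmulVg wk gmul_idl. Qed.

Lemma gmulVKg w k : gtgt w = gtgt k -> gmul w (gmul (ginv w) k) = k.
Proof. by move=> wk; rewrite -gmulA ?gtgt_inv ?gsrc_inv // gmulgV wk gmul_idl. Qed.

Section Subgroupoid.
Variable H : {set gmor G}.
Hypothesis subH : subgroupoid H.

Lemma hconn_sym a b : hconn H a b -> hconn H b a.
Proof.
case=> h hH [sh th]; exists (ginv h); first by case: subH => _ /(_ h hH).
by rewrite gsrc_inv gtgt_inv.
Qed.

Lemma hconn_trans a b c : hconn H a b -> hconn H b c -> hconn H a c.
Proof.
case=> h hH [sh th] [k kH [sk tk]]; exists (gmul k h).
  by case: subH => /(_ k h kH hH) + _ _; apply; rewrite sk.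
by rewrite gsrc_mul ?gtgt_mul ?sk.
Qed.

End Subgroupoid.
End Groupoid.

Section UnitalPartialAction.
Variables (G : groupoid) (S : pzRingType) (e : gmor G -> S) (alpha : gmor G -> S -> S).
Hypothesis upa : unital_partial_action e alpha.
Implicit Types (g h k u v w : gmor G) (a b t : S).

Lemma e_idem g : e g * e g = e g.
Proof. by case: upa => /(_ g) []. Qed.

Lemma e_comm g a : e g * a = a * e g.
Proof. by case: upa => /(_ g) []. Qed.

Lemma inSP g a : inS e g a <-> a * e g = a.
Proof. by split=> [[s ->]|<-]; [rewrite -mulrA e_idem | exists a]. Qed.

Lemma inS_e g : inS e g (e g).
Proof. by apply/inSP; rewrite e_idem. Qed.

Lemma inS0 g : inS e g 0.
Proof. by exists 0; rewrite mul0r. Qed.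

Lemma inS_mull g a b : inS e g a -> inS e g (b * a).
Proof. by move/inSP=> aP; apply/inSP; rewrite -mulrA aP. Qed.

Lemma inS_mulr g a b : inS e g a -> inS e g (a * b).
Proof. by move/inSP=> aP; apply/inSP; rewrite -mulrA -e_comm mulrA aP. Qed.

Lemma inS_tgt g a : inS e g a -> inS e (gid (gtgt g)) a.
Proof. by case: upa => _ [+ _]; apply. Qed.

Lemma inS_src g a : inS e (ginv g) a -> inS e (gid (gsrc g)) a.
Proof. by rewrite -(gtgt_inv g); apply: inS_tgt. Qed.

Lemma same_e g h : sameS e g h -> e g = e h.
Proof.
move=> gh; have /inSP egh := (gh (e g)).1 (inS_e g).
by have /inSP ehg := (gh (e h)).2 (inS_e h); rewrite -egh e_comm ehg.
Qed.

Lemma mulr_e_tgt a g : a * e g = a * e (gid (gtgt g)) * e g.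
Proof. by rewrite -mulrA e_comm ((inSP _ _).1 (inS_tgt (inS_e g))). Qed.

Lemma mulr_e_src a g : a * e (ginv g) = a * e (gid (gsrc g)) * e (ginv g).
Proof. by rewrite [LHS]mulr_e_tgt gtgt_inv. Qed.

Lemma alpha_in g a : inS e (ginv g) a -> inS e g (alpha g a).
Proof. by case: upa => _ [_ [/(_ g) [+ _] _]]; apply. Qed.

Lemma alpha_add g a b : inS e (ginv g) a -> inS e (ginv g) b ->
  alpha g (a + b) = alpha g a + alpha g b.
Proof. by case: upa => _ [_ [/(_ g) [_ [+ _]] _]]; apply. Qed.

Lemma alpha_mul g a b : inS e (ginv g) a -> inS e (ginv g) b ->
  alpha g (a * b) = alpha g a * alpha g b.
Proof. by case: upa => _ [_ [/(_ g) [_ [_ [+ _]]] _]]; apply. Qed.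

Lemma alpha_inj g a b : inS e (ginv g) a -> inS e (ginv g) b ->
  alpha g a = alpha g b -> a = b.
Proof. by case: upa => _ [_ [/(_ g) [_ [_ [_ [+ _]]]] _]]; apply. Qed.

Lemma alpha_surj g c : inS e g c -> exists2 a, inS e (ginv g) a & alpha g a = c.
Proof. by case: upa => _ [_ [/(_ g) [_ [_ [_ [_ +]]]] _]]; apply. Qed.

Lemma alpha_comp g h a : gsrc g = gtgt h -> inS e (ginv h) a ->
  inS e (ginv g) (alpha h a) ->
  inS e (ginv (gmul g h)) a /\ alpha g (alpha h a) = alpha (gmul g h) a.
Proof.
move=> gh ah hag; case: upa => _ [_ [_ [_ comp]]].
exact: comp gh a ah hag (alpha_in ah).
Qed.

Lemma alpha0 g : alpha g 0 = 0.
Proof.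
have := alpha_add (inS0 (ginv g)) (inS0 (ginv g)); rewrite addr0 => a00.
by apply: (addrI (alpha g 0)); rewrite -a00 addr0.
Qed.

Lemma alpha_e g : alpha g (e (ginv g)) = e g.
Proof.
have [c cS ac] := alpha_surj (inS_e g).
have /inSP uP := alpha_in (inS_e (ginv g)).
by rewrite -uP -{1}ac -(alpha_mul (inS_e _) cS) e_comm ((inSP _ _).1 cS).
Qed.

Definition fixes g a := alpha g (a * e (ginv g)) = a * e g.

Lemma fixes_loop_e k t : gsrc k = gtgt k -> fixes k t -> fixes k (t * e (gid (gsrc k))).
Proof. by move=> kk; rewrite /fixes -mulr_e_src kk -mulr_e_tgt. Qed.

Lemma fixes_loop_id k : gsrc k = gtgt k -> fixes k (e (gid (gsrc k))).
Proof.
by move=> kk; rewrite -[e _]mul1r; apply: fixes_loop_e; rewrite // /fixes !mul1r alpha_e.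
Qed.

Definition full_arrow w := e w = e (gid (gtgt w)) /\ e (ginv w) = e (gid (gsrc w)).

Lemma full_arrow_inv w : full_arrow w -> full_arrow (ginv w).
Proof. by case=> ew ewV; split; rewrite ?ginvK ?gtgt_inv ?gsrc_inv. Qed.

Section FullArrow.
Variable w : gmor G.
Hypothesis wF : full_arrow w.

Lemma inS_full_tgt b : inS e (gid (gtgt w)) b -> inS e w b.
Proof. by rewrite /inS (proj1 wF). Qed.

Lemma inS_full_src b : inS e (gid (gsrc w)) b -> inS e (ginv w) b.
Proof. by rewrite /inS (proj2 wF). Qed.

Lemma inS_full_inv k b : gsrc w = gtgt k -> inS e k b -> inS e (ginv w) b.
Proof. by move=> wk /inS_tgt; rewrite -wk; apply: inS_full_src. Qed.

Lemma einv_full_mul k : gsrc w = gtgt k -> e (ginv (gmul w k)) = e (ginv k).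
Proof.
move=> wk; apply/esym/same_e => a; split=> aS.
  exact: (alpha_comp wk aS (inS_full_inv wk (alpha_in aS))).1.
have wwk : gsrc (ginv w) = gtgt (gmul w k) by rewrite gsrc_inv gtgt_mul.
have wkS : inS e (ginv (ginv w)) (alpha (gmul w k) a).
  by rewrite ginvK; apply: inS_full_tgt; rewrite -(gtgt_mul wk); apply/inS_tgt/alpha_in.
by have [+ _] := alpha_comp wwk aS wkS; rewrite gmulKg.
Qed.

Lemma alpha_full_mul k a : gsrc w = gtgt k -> inS e (ginv k) a ->
  alpha (gmul w k) a = alpha w (alpha k a).
Proof. by move=> wk aS; have [_ ->] := alpha_comp wk aS (inS_full_inv wk (alpha_in aS)). Qed.

Lemma alpha_full_e k : gsrc w = gtgt k -> alpha w (e k) = e (gmul w k).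
Proof.
move=> wk.
by rewrite -[e k]alpha_e -(alpha_full_mul wk (inS_e _)) -(einv_full_mul wk) alpha_e.
Qed.

End FullArrow.

Lemma e_mul_full k w : full_arrow w -> gsrc k = gtgt w -> e (gmul k w) = e k.
Proof.
move=> wF kw; have wkV : gsrc (ginv w) = gtgt (ginv k) by rewrite gsrc_inv gtgt_inv.
by rewrite -[gmul k w]ginvK ginv_mul // (einv_full_mul (full_arrow_inv wF) wkV) ginvK.
Qed.

Lemma alpha_mul_full k w a : full_arrow w -> gsrc k = gtgt w ->
  inS e (ginv (gmul k w)) a -> alpha (gmul k w) a = alpha k (alpha w a).
Proof.
move=> wF kw aS.
have inS_wV b : inS e (ginv (gmul k w)) b -> inS e (ginv w) b.
  by move/inS_src; rewrite gsrc_mul //; apply: inS_full_src.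
have kwV : gsrc w = gtgt (ginv (gmul k w)) by rewrite gtgt_inv gsrc_mul.
have waS : inS e (ginv k) (alpha w a).
  have /inSP <- := aS.
  rewrite (alpha_mul (inS_wV _ aS) (inS_wV _ (inS_e _))) (alpha_full_e wF kwV).
  by rewrite ginv_mul // gmulVKg ?gtgt_inv //; apply/inS_mull/inS_e.
by have [_ ->] := alpha_comp kw (inS_wV _ aS) waS.
Qed.

Section Conjugation.
Variables u v g : gmor G.
Hypotheses (uF : full_arrow u) (vF : full_arrow v).
Hypotheses (uv : gsrc u = gsrc v) (gu : gsrc g = gtgt u) (vg : gtgt v = gtgt g).

Local Notation k := (gmul g u).
Local Notation l := (gmul (ginv v) (gmul g u)).

Let vk : gtgt v = gtgt k. Proof. by rewrite gtgt_mul. Qed.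
Let vlE : gmul v l = k. Proof. exact: gmulVKg vk. Qed.
Let vl : gsrc v = gtgt l. Proof. by rewrite gtgt_mul ?gtgt_inv // gsrc_inv. Qed.
Let src_l : gsrc l = gsrc u. Proof. by rewrite !gsrc_mul // gsrc_inv. Qed.

Lemma alpha_conj_einv : alpha u (e (ginv l)) = e (ginv g).
Proof.
have uk : gsrc u = gtgt (ginv k) by rewrite gtgt_inv gsrc_mul.
rewrite -(einv_full_mul vF vl) vlE (alpha_full_e uF uk) ginv_mul //.
by rewrite gmulVKg // gtgt_inv.
Qed.

Lemma alpha_conj_e : alpha v (e l) = e g.
Proof. by rewrite (alpha_full_e vF vl) vlE (e_mul_full uF gu). Qed.

Lemma alpha_conj x : inS e (ginv l) x -> alpha g (alpha u x) = alpha v (alpha l x).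
Proof.
move=> xS; rewrite -(alpha_full_mul vF vl xS) vlE alpha_mul_full //.
by rewrite /inS -vlE (einv_full_mul vF vl).
Qed.

Lemma fixes_conj a b : inS e (gid (gsrc u)) a ->
  b * e (gid (gsrc g)) = alpha u a -> b * e (gid (gtgt g)) = alpha v a ->
  fixes g b <-> fixes (gmul (gmul (ginv v) g) u) a.
Proof.
move=> aS bu bv; rewrite gmulA ?gsrc_inv //.
have aU : inS e (ginv u) a by apply: (inS_full_src uF).
have aV : inS e (ginv v) a by apply: (inS_full_src vF); rewrite -uv.
have lU : inS e (ginv u) (e (ginv l)).
  by apply: (inS_full_src uF); rewrite -src_l; apply/inS_src/inS_e.
have lV : inS e (ginv v) (e l).
  by apply: (inS_full_src vF); rewrite vl; apply/inS_tgt/inS_e.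
have xS : inS e (ginv l) (a * e (ginv l)) by apply/inS_mull/inS_e.
have lx : inS e (ginv v) (alpha l (a * e (ginv l))).
  by apply: (inS_full_src vF); rewrite vl; apply/inS_tgt/alpha_in.
rewrite /fixes [b * e (ginv g)]mulr_e_src bu -alpha_conj_einv -(alpha_mul aU lU).
rewrite [b * e g]mulr_e_tgt bv -alpha_conj_e -(alpha_mul aV lV) alpha_conj //.
by split=> [/(alpha_inj lx (inS_mulr _ aV))|->].
Qed.

End Conjugation.

Section Components.
Hypothesis dsum : dsum_objects e.
Variables (H : {set gmor G}) (rep : gobj G -> gobj G) (tau : gobj G -> gmor G).
Hypothesis subH : subgroupoid H.
Hypothesis hconn_rep : forall z, hconn H z (rep z).
Hypothesis rep_hconn : forall z z', hconn H z z' -> rep z = rep z'.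
Hypothesis tau_in : forall z, [/\ tau z \in H, gsrc (tau z) = rep z & gtgt (tau z) = z].
Hypothesis tau_sameS :
  forall z, sameS e (ginv (tau z)) (gid (rep z)) /\ sameS e (tau z) (gid z).

Local Notation T := (fixring e alpha (fun _ => True) (fun k => k \in H)).
Local Notation Ty y := (fixring e alpha (inS e (gid y))
                          (fun k => [/\ k \in H, gsrc k = y & gtgt k = y])).

Definition tau_conj g := gmul (gmul (ginv (tau (gtgt g))) g) (tau (gsrc g)).

Definition tau_extend y a := \sum_(z | rep z == y) alpha (tau z) a.

Lemma e_id_orth x y : x != y -> e (gid x) * e (gid y) = 0.
Proof.
move=> xy; set c := e (gid x) * e (gid y).
have cx : inS e (gid x) c by rewrite /c e_comm; apply/inS_mull/inS_e.
have cy : inS e (gid y) c by apply/inS_mull/inS_e.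
case: dsum => _ /(_ (fun z => if z == x then c else 0) (fun z => if z == y then c else 0)).
move=> /(_ _ _ _ x); rewrite eqxx (negbTE xy); apply.
- by move=> z; case: eqP => [->|_] //; apply: inS0.
- by move=> z; case: eqP => [->|_] //; apply: inS0.
by rewrite -!big_mkcond /= !big_pred1_eq.
Qed.

Lemma hconnP z z' : hconn H z z' <-> rep z = rep z'.
Proof.
split=> [|zz']; first exact: rep_hconn.
apply: (hconn_trans subH (hconn_rep z)); rewrite zz'.
exact/(hconn_sym subH)/hconn_rep.
Qed.

Lemma tau_full z : full_arrow (tau z).
Proof.
rewrite /full_arrow; case: (tau_in z) => _ -> ->.
by case: (tau_sameS z) => ? ?; split; apply: same_e.
Qed.

Lemma alpha_tau_e z : alpha (tau z) (e (gid (rep z))) = e (gid z).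
Proof.
case: (tau_full z) (tau_in z) => etau etauV [_ sz tz].
by rewrite -sz -etauV alpha_e etau tz.
Qed.

Lemma tau_conj_src g : gsrc (tau_conj g) = rep (gsrc g).
Proof.
case: (tau_in (gsrc g)) (tau_in (gtgt g)) => [_ su tu] [_ _ tv].
by rewrite /tau_conj !gsrc_mul ?gtgt_mul ?gsrc_inv ?tu ?tv.
Qed.

Lemma tau_conj_tgt g : gtgt (tau_conj g) = rep (gtgt g).
Proof.
case: (tau_in (gsrc g)) (tau_in (gtgt g)) => [_ _ tu] [_ sv tv].
by rewrite /tau_conj !gtgt_mul ?gtgt_inv ?gsrc_mul ?gsrc_inv ?tu ?tv.
Qed.

Lemma tau_conj_in g : g \in H -> tau_conj g \in H.
Proof.
case: subH (tau_in (gsrc g)) (tau_in (gtgt g)) => [mulH invH _] [uH _ tu] [vH _ tv] gH.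
apply: (mulH) => //; last by rewrite /tau_conj gsrc_mul ?gsrc_inv ?tu ?tv.
by apply: mulH => //; [apply: invH | rewrite gsrc_inv tv].
Qed.

Lemma fixes_tau_conj g a b : rep (gsrc g) = rep (gtgt g) ->
  inS e (gid (rep (gsrc g))) a ->
  b * e (gid (gsrc g)) = alpha (tau (gsrc g)) a ->
  b * e (gid (gtgt g)) = alpha (tau (gtgt g)) a ->
  fixes g b <-> fixes (tau_conj g) a.
Proof.
case: (tau_in (gsrc g)) (tau_in (gtgt g)) => [_ su tu] [_ sv tv] rg aS.
by apply: fixes_conj; rewrite ?su ?sv ?tu ?tv //; apply: tau_full.
Qed.

Lemma fixT_e_tau t z : T t -> t * e (gid z) = alpha (tau z) (t * e (gid (rep z))).
Proof.
case: (tau_full z) (tau_in z) => etau etauV [tH sz tz] [_ /(_ _ tH)].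
by rewrite etau etauV sz tz => ->.
Qed.

Lemma fixT_restr t y : T t -> Ty y (t * e (gid y)).
Proof.
case=> _ tT; split=> [|k [kH sk tk]]; first exact/inS_mull/inS_e.
by rewrite -sk; apply: fixes_loop_e; [rewrite sk tk | apply: tT].
Qed.

Lemma tau_extend_e y a (x : gobj G) : inS e (gid y) a ->
  tau_extend y a * e (gid x) = if rep x == y then alpha (tau x) a else 0.
Proof.
move=> aS; rewrite /tau_extend mulr_suml.
rewrite (eq_bigr (fun z => if z == x then alpha (tau z) a else 0)) => [|z /eqP rz].
  rewrite -big_mkcondr; case: ifP => xy.
    by rewrite (big_pred1 x) // => z /=; case: (eqVneq z x) => [->|]; rewrite ?xy ?andbF.
  by rewrite big_pred0 // => z; case: (eqVneq z x) => [->|]; rewrite ?xy ?andbF.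
have zS : inS e (gid z) (alpha (tau z) a).
  case: (tau_in z) => _ sz tz; rewrite -{1}tz; apply/inS_tgt/alpha_in.
  by apply: (inS_full_src (tau_full z)); rewrite sz rz.
case: (eqVneq z x) => [<-|zx]; first by rewrite ((inSP _ _).1 zS).
by rewrite -((inSP _ _).1 zS) -mulrA e_id_orth // mulr0.
Qed.

Lemma tau_extend_e_rep y a x : inS e (gid y) a -> rep x = y ->
  tau_extend y a * e (gid x) = alpha (tau x) a.
Proof. by move=> aS xy; rewrite tau_extend_e // xy eqxx. Qed.

Lemma fixT_tau_extend y a : Ty y a -> T (tau_extend y a).
Proof.
case=> aS aT; split=> // k kH.
have rk : rep (gsrc k) = rep (gtgt k) by apply: rep_hconn; exists k.
have [ky|ky] := eqVneq (rep (gsrc k)) y; last first.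
  rewrite mulr_e_src (mulr_e_tgt _ k) !tau_extend_e // -rk (negbTE ky).
  by rewrite !mul0r alpha0.
have extS := tau_extend_e_rep aS ky.
have extT := tau_extend_e_rep aS (etrans (esym rk) ky).
apply/(fixes_tau_conj rk _ extS extT); first by rewrite ky.
apply: aT; split; first exact: tau_conj_in.
  by rewrite tau_conj_src.
by rewrite tau_conj_tgt -rk.
Qed.

Hypothesis e_neq0 : forall g, e g != 0.

Lemma stabG_rep g : stabG e alpha T g -> rep (gsrc g) = rep (gtgt g).
Proof.
move=> gT; have eS := inS_e (gid (rep (gsrc g))).
have eT : Ty (rep (gsrc g)) (e (gid (rep (gsrc g)))).
  by split=> // k [_ sk tk]; rewrite -sk; apply: fixes_loop_id; rewrite sk tk.
have := gT _ (fixT_tau_extend eT).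
rewrite mulr_e_src (mulr_e_tgt _ g) !tau_extend_e // eqxx.
case: eqP => // _; rewrite alpha_tau_e -[e (gid _)]mul1r -mulr_e_src mul1r alpha_e mul0r.
by move=> eg0; have := e_neq0 g; rewrite eg0 eqxx.
Qed.

Lemma stabG_conj g : stabG e alpha T g -> rep (gsrc g) = rep (gtgt g) ->
  stabGy e alpha (rep (gsrc g)) (Ty (rep (gsrc g))) (tau_conj g).
Proof.
move=> gT rg; split; [exact: tau_conj_src | by rewrite tau_conj_tgt rg |].
move=> a aTy; have [aS _] := aTy.
have extS := tau_extend_e_rep aS (erefl (rep (gsrc g))).
have extT := tau_extend_e_rep aS (esym rg).
by apply/(fixes_tau_conj rg aS extS extT)/gT/fixT_tau_extend.
Qed.

Lemma conj_stabG g : rep (gsrc g) = rep (gtgt g) ->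
  stabGy e alpha (rep (gsrc g)) (Ty (rep (gsrc g))) (tau_conj g) -> stabG e alpha T g.
Proof.
move=> rg [_ _ cT] t tT.
have aS : inS e (gid (rep (gsrc g))) (t * e (gid (rep (gsrc g)))).
  exact/inS_mull/inS_e.
have tS := fixT_e_tau (gsrc g) tT.
have tT' : t * e (gid (gtgt g)) = alpha (tau (gtgt g)) (t * e (gid (rep (gsrc g)))).
  by rewrite rg; apply: fixT_e_tau.
by apply/(fixes_tau_conj rg aS tS tT')/cT/fixT_restr.
Qed.

Lemma stabG_tau_conjP g : stabG e alpha T g <->
  (hconn H (gsrc g) (gtgt g) /\
   stabGy e alpha (rep (gsrc g)) (Ty (rep (gsrc g))) (tau_conj g)).
Proof.
split=> [gT | [/hconnP rg]]; last exact: conj_stabG.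
have rg := stabG_rep gT.
by split; [apply/hconnP | apply: stabG_conj].
Qed.

End Components.
End UnitalPartialAction.

Theorem lemma4p2 (G : groupoid) (S : pzRingType)
  (e : gmor G -> S) (alpha : gmor G -> S -> S)
  (H : {set gmor G}) (rep : gobj G -> gobj G) (tau : gobj G -> gmor G) :
  gconnected G ->
  dsum_objects e ->
  unital_partial_action e alpha ->
  group_type_on e [set: gmor G] ->
  (forall g, e g != 0) ->
  wSub e H ->
  (* rep z = y_j, the chosen object of the component Y_j containing z *)
  (forall z, hconn H z (rep z)) ->
  (forall z z', hconn H z z' -> rep z = rep z') ->
  (* tau z = tau_{j,z}, the chosen transversal of H_j for y_j *)
  (forall z, tau (rep z) = gid (rep z)) ->
  (forall z, [/\ tau z \in H, gsrc (tau z) = rep z & gtgt (tau z) = z]) ->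
  (forall z, sameS e (ginv (tau z)) (gid (rep z)) /\ sameS e (tau z) (gid z)) ->
  let T := fixring e alpha (fun _ => True) (fun k => k \in H) in
  let Ty := fun y => fixring e alpha (inS e (gid y))
                       (fun k => [/\ k \in H, gsrc k = y & gtgt k = y]) in
  forall g : gmor G,
    stabG e alpha T g <->
    (hconn H (gsrc g) (gtgt g) /\
     stabGy e alpha (rep (gsrc g)) (Ty (rep (gsrc g)))
       (gmul (gmul (ginv (tau (gtgt g))) g) (tau (gsrc g)))).
Proof.
move=> _ dsum upa _ e_neq0 [[subH _] _] hconn_rep rep_hconn _ tau_in tau_sameS T Ty g.
exact: (stabG_tau_conjP upa dsum subH hconn_rep rep_hconn tau_in tau_sameS e_neq0).
Qed.
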